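(* Let $x_2>0$, $x_1\in(0,x_2)$ and $y_1,y_2,y_3\in\mathbb R$ with $0<y_3<y_1\le y_2$. Define $\rho_1,\rho_2:[0,x_2]\to\mathbb R$ by $\rho_1(x)=\frac{y_2-y_1}{x_1}x+y_1$ for $x\in[0,x_1]$, $\rho_1(x)=\frac{y_3-y_2}{x_2-x_1}(x-x_1)+y_2$ for $x\in(x_1,x_2]$, and $\rho_2(x)=\frac{y_3-y_1}{x_2}x+y_1$. Then $\mathcal N(\rho_2)\le\mathcal N(\rho_1)$, where $\mathcal N(\rho)=\int_0^{x_2}\frac{(\rho')^2}{\rho\sqrt{1+(\rho')^2}}\,dx$. *)

From Stdlib Require Import Reals Lra.
From Coquelicot Require Import Coquelicot.
Open Scope R_scope.

Definition N_fun (rho : R -> R) (b : R) : R :=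
  RInt (fun x => (Derive rho x) ^ 2 / (rho x * sqrt (1 + (Derive rho x) ^ 2))) 0 b.

Definition rho1 (x1 x2 y1 y2 y3 : R) (x : R) : R :=
  if Rle_dec x x1 then (y2 - y1) / x1 * x + y1
  else (y3 - y2) / (x2 - x1) * (x - x1) + y2.

Definition rho2 (x2 y1 y3 : R) (x : R) : R := (y3 - y1) / x2 * x + y1.

From Stdlib Require Import Reals Lra.
From Coquelicot Require Import Coquelicot.
Open Scope R_scope.

(* On an interval where rho is affine with slope s, the integrand of N is
   slope_sin s * rho' / rho with slope_sin s = s / sqrt (1 + s^2), so that piece
   contributes slope_sin s * (ln rho(end) - ln rho(start)).  With a, b the slopes of
   rho1 and c that of rho2 this gives
     N(rho2) = slope_sin c (ln y3 - ln y1),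
     N(rho1) = slope_sin a (ln y2 - ln y1) + slope_sin b (ln y3 - ln y2),
   and a >= 0 > c >= b.  As slope_sin is increasing, the first term of N(rho1) is
   nonnegative and the second dominates N(rho2). *)

Definition slope_sin (s : R) : R := s / sqrt (1 + s ^ 2).

Lemma slope_sin_le (b c : R) : b <= c -> slope_sin b <= slope_sin c.
Proof.
intros Hbc; unfold slope_sin.
set (Sb := sqrt (1 + b ^ 2)); set (Sc := sqrt (1 + c ^ 2)).
assert (Sb_pos : 0 < Sb) by (apply sqrt_lt_R0; nra).
assert (Sc_pos : 0 < Sc) by (apply sqrt_lt_R0; nra).
assert (Sb_sq : Sb * Sb = 1 + b ^ 2) by (apply sqrt_sqrt; nra).
assert (Sc_sq : Sc * Sc = 1 + c ^ 2) by (apply sqrt_sqrt; nra).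
(* [(c Sb)^2 - (b Sc)^2 = c^2 - b^2], so comparing squares settles the same-sign cases. *)
assert (Key : b * Sc <= c * Sb).
{ assert (Sq : (c * Sb) * (c * Sb) - (b * Sc) * (b * Sc) = c * c - b * b).
  { transitivity (c * c * (Sb * Sb) - b * b * (Sc * Sc)); [ring|].
    rewrite Sb_sq, Sc_sq; ring. }
  destruct (Rle_dec 0 b) as [b_nn | b_neg]; [|destruct (Rle_dec c 0) as [c_np | c_pos]].
  - apply Rsqr_incr_0_var; unfold Rsqr; nra.
  - apply Ropp_le_cancel, Rsqr_incr_0_var; unfold Rsqr; nra.
  - nra. }
apply (Rmult_le_reg_r (Sb * Sc)); [nra|].
replace (b / Sb * (Sb * Sc)) with (b * Sc) by (field; lra).
replace (c / Sc * (Sb * Sc)) with (c * Sb) by (field; lra).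
exact Key.
Qed.

Definition N_density (rho : R -> R) (x : R) : R :=
  (Derive rho x) ^ 2 / (rho x * sqrt (1 + (Derive rho x) ^ 2)).

Lemma Derive_affine_on (rho : R -> R) (s p q u x : R) :
  (forall y, p < y < q -> rho y = s * (y - p) + u) -> p < x < q -> Derive rho x = s.
Proof.
intros Hrho Hx.
rewrite (Derive_ext_loc _ (fun y => s * (y - p) + u)).
- apply is_derive_unique; auto_derive; [easy | ring].
- apply (filter_imp (fun y => p < y < q)); [exact Hrho|].
  apply (open_and (fun y => p < y) (fun y => y < q)); [apply open_gt | apply open_lt | exact Hx].
Qed.

Lemma is_RInt_N_density_chord (rho : R -> R) (p q u v : R) :
  p < q -> 0 < u -> 0 < v ->
  (forall y, p < y < q -> rho y = (v - u) / (q - p) * (y - p) + u) ->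
  is_RInt (N_density rho) p q (slope_sin ((v - u) / (q - p)) * (ln v - ln u)).
Proof.
intros Hpq Hu Hv Hrho; set (s := (v - u) / (q - p)) in Hrho |- *.
assert (S_pos : 0 < sqrt (1 + s ^ 2)) by (apply sqrt_lt_R0; nra).
assert (chord_pos : forall x, p <= x <= q -> 0 < s * (x - p) + u).
{ intros x Hx; replace (s * (x - p) + u) with (((q - x) * u + (x - p) * v) / (q - p))
    by (unfold s; field; lra).
  apply Rdiv_lt_0_compat; [|lra].
  destruct (Rlt_le_dec x q); nra. }
set (F x := slope_sin s * ln (s * (x - p) + u)).
assert (FTC : is_RInt (fun x => s ^ 2 / ((s * (x - p) + u) * sqrt (1 + s ^ 2))) p q
                (minus (F q) (F p))).
{ apply (is_RInt_derive F); rewrite Rmin_left, Rmax_right by lra; intros x Hx;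
    specialize (chord_pos x Hx).
  - unfold F, slope_sin; auto_derive; [lra |].
    replace (s * (s * 1)) with (s ^ 2) by ring; field; lra.
  - apply (ex_derive_continuous (V := R_NormedModule)); auto_derive.
    replace (s * (s * 1)) with (s ^ 2) by ring.
    apply Rgt_not_eq, Rmult_lt_0_compat; lra. }
replace (slope_sin s * (ln v - ln u)) with (minus (F q) (F p)).
2: { unfold F, minus, plus, opp; simpl.
     replace (s * (q - p) + u) with v by (unfold s; field; lra).
     replace (s * (p - p) + u) with u by ring; ring. }
refine (is_RInt_ext _ _ _ _ _ _ FTC).
rewrite Rmin_left, Rmax_right by lra; intros x Hx.
unfold N_density; rewrite (Derive_affine_on rho s p q u x Hrho Hx), Hrho by exact Hx.
reflexivity.
Qed.

Lemma slope_sin_nonneg (s : R) : 0 <= s -> 0 <= slope_sin s.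
Proof.
intros Hs; unfold slope_sin.
apply Rdiv_le_0_compat; [exact Hs | apply sqrt_lt_R0; nra].
Qed.

Lemma slope_sin_neg (s : R) : s < 0 -> slope_sin s < 0.
Proof.
intros Hs; unfold slope_sin, Rdiv.
apply Rmult_neg_pos; [exact Hs | apply Rinv_0_lt_compat, sqrt_lt_R0; nra].
Qed.

Lemma N_fun_rho2 (x2 y1 y3 : R) : 0 < x2 -> 0 < y1 -> 0 < y3 ->
  N_fun (rho2 x2 y1 y3) x2 = slope_sin ((y3 - y1) / x2) * (ln y3 - ln y1).
Proof.
intros Hx2 Hy1 Hy3; apply is_RInt_unique.
rewrite <- (Rminus_0_r x2) at 2.
apply is_RInt_N_density_chord; try lra.
intros y _; unfold rho2; rewrite !Rminus_0_r; ring.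
Qed.

Lemma N_fun_rho1 (x1 x2 y1 y2 y3 : R) :
  0 < x1 < x2 -> 0 < y1 -> 0 < y2 -> 0 < y3 ->
  N_fun (rho1 x1 x2 y1 y2 y3) x2 =
  slope_sin ((y2 - y1) / x1) * (ln y2 - ln y1)
  + slope_sin ((y3 - y2) / (x2 - x1)) * (ln y3 - ln y2).
Proof.
intros Hx Hy1 Hy2 Hy3; apply is_RInt_unique.
apply (is_RInt_Chasles (V := R_NormedModule) _ 0 x1 x2).
- rewrite <- (Rminus_0_r x1) at 2.
  apply is_RInt_N_density_chord; try lra.
  intros y Hy; unfold rho1; destruct (Rle_dec y x1); [|lra].
  rewrite !Rminus_0_r; ring.
- apply is_RInt_N_density_chord; try lra.
  intros y Hy; unfold rho1; destruct (Rle_dec y x1); [lra | reflexivity].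
Qed.

Theorem lemma2p3 (x1 x2 y1 y2 y3 : R)
  (hx2 : 0 < x2) (hx1 : 0 < x1) (hx12 : x1 < x2)
  (hy3 : 0 < y3) (hy31 : y3 < y1) (hy12 : y1 <= y2) :
  N_fun (rho2 x2 y1 y3) x2 <= N_fun (rho1 x1 x2 y1 y2 y3) x2.
Proof.
rewrite N_fun_rho2, N_fun_rho1 by lra.
set (a := (y2 - y1) / x1); set (b := (y3 - y2) / (x2 - x1)); set (c := (y3 - y1) / x2).
assert (a_nn : 0 <= a) by (apply Rdiv_le_0_compat; lra).
assert (c_neg : c < 0) by (apply Rdiv_neg_pos; lra).
(* Since [rho1 x1 = y2 >= y1 > rho2 x1], the last piece of [rho1] is steeper than [rho2]. *)
assert (b_le_c : b <= c).
{ assert (b * (x2 - x1) = y3 - y2) by (unfold b; field; lra).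
  assert (c * x2 = y3 - y1) by (unfold c; field; lra).
  nra. }
assert (ga_nn := slope_sin_nonneg a a_nn).
assert (gc_neg := slope_sin_neg c c_neg).
assert (gb_le_gc := slope_sin_le b c b_le_c).
assert (ln_y1_y2 : ln y1 <= ln y2) by (apply ln_le; lra).
assert (ln_y3_y1 : ln y3 < ln y1) by (apply ln_increasing; lra).
nra.
Qed.
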